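(* For every integer $k \geq 2$ and every $\varepsilon > 0$ there exist $\delta > 0$ and $n_0$ such that the following holds for every $n \geq n_0$. Let $H$ be an $n$-vertex $k$-graph with $\delta_1(H) \geq (2^{-k+1} + \varepsilon)\binom{n-1}{k-1}$. Then for every pair of distinct vertices $x_1, x_2 \in V(H)$, there are at least $\delta n^{2k-3}$ distinct $(x_1, x_2)$-paths of length two in $H$.
   Context: $\delta_1(H)$ is the minimum number of edges containing a vertex. For $x_1, x_2 \in V(H)$, an $(x_1,x_2)$-path is a subgraph $P' \subseteq H$ which equals the $k$-expansion $P^{(k)}$ of a graph path $P$ with endpoints $x_1, x_2$ (the $k$-expansion replaces each edge $uv$ by a $k$-edge consisting of $u$, $v$ and $k-2$ new vertices belonging to no other edge). The length of the path is its number of edges; thus an $(x_1,x_2)$-path of length two consists of two edges $e \ni x_1$, $f \ni x_2$ sharing exactly one vertex, which differs from $x_1, x_2$. *)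

From HB Require Import structures.
From mathcomp Require Import all_boot all_order all_algebra.
From mathcomp Require Import reals.
Set Implicit Arguments. Unset Strict Implicit. Unset Printing Implicit Defensive.

Definition kgraph (n k : nat) (E : {set {set 'I_n}}) : Prop :=
  forall e, e \in E -> #|e| = k.

Definition deg (n : nat) (E : {set {set 'I_n}}) (v : 'I_n) : nat :=
  #|[set e in E | v \in e]|.

(* (x1,x2)-path of length two: edges e \ni x1, f \ni x2 sharing exactly one
   vertex, which differs from x1 and x2 (given x1 \in e, x2 \in f, this is
   x1 \notin f and x2 \notin e).  The subgraph {e, f} is determined by the
   ordered pair (e, f), e being the edge containing x1. *)
Definition is_path2 (n : nat) (E : {set {set 'I_n}}) (x1 x2 : 'I_n)
  (p : {set 'I_n} * {set 'I_n}) : bool :=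
  [&& p.1 \in E, p.2 \in E, x1 \in p.1, x2 \in p.2,
      #|p.1 :&: p.2| == 1%N, x1 \notin p.2 & x2 \notin p.1].

Definition paths2 (n : nat) (E : {set {set 'I_n}}) (x1 x2 : 'I_n) :=
  [set p | is_path2 E x1 x2 p].

From HB Require Import structures.
From mathcomp Require Import all_boot all_order all_algebra.
From mathcomp Require Import reals.
From mathcomp Require Import zify ring lra.

Set Implicit Arguments.
Unset Strict Implicit.
Unset Printing Implicit Defensive.

(* Write k = p + 2 and N = n - 2, and for distinct x, y call a vertex w heavy if
   at least gam N^p edges (gam = heavy_const) contain x and w but avoid y.  An edge
   through x avoiding y either lies inside {x} and the s heavy vertices (at most
   C(s, k-1) edges) or contains a light vertex (at most N * gam N^p = O(eps) C(N, k-1)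
   edges), and at most C(n, k-2) = o(C(N, k-1)) edges contain both x and y.  The
   degree condition thus gives C(s, k-1) >= (2^(1-k) + eps/2) C(N, k-1), whence
   s >= (1/2 + c) N with c = excess.  So at least 2cN vertices w are heavy for both
   (x1, x2) and (x2, x1).  For each of them there are at least (gam N^p)^2 pairs
   (e, f) of edges through w with x1 in e \ f and x2 in f \ e, and all but
   O(n^(2p-1)) of them meet only in w, i.e. form an (x1, x2)-path with middle vertex w.
   Summing over w gives Omega(n^(2k-3)) paths. *)

Lemma ffact_leq_expn n m : n ^_ m <= n ^ m.
Proof.
rewrite ffact_prod -[m in n ^ m]card_ord -prod_nat_const.
by apply: leq_prod => i _; apply: leq_subr.
Qed.

Lemma bin_leq_expn n m : 'C(n, m) <= n ^ m.
Proof.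
by rewrite (leq_trans (leq_pmulr _ (fact_gt0 m))) // bin_ffact ffact_leq_expn.
Qed.

Lemma expn_leq_bin n m : 2 * m <= n -> n ^ m <= (2 * m) ^ m * 'C(n, m).
Proof.
move=> le2mn; rewrite expnMn -mulnA.
apply: leq_trans (_ : 2 ^ m * (m`! * 'C(n, m)) <= _); last first.
  by rewrite leq_mul2l leq_mul2r -ffactnn ffact_leq_expn !orbT.
rewrite [m`! * _]mulnC bin_ffact ffact_prod -[m in n ^ m]card_ord -prod_nat_const.
rewrite -[m in 2 ^ m]card_ord -prod_nat_const -big_split /=.
by apply: leq_prod => i _; have := ltn_ord i; lia.
Qed.

Lemma bin_mul_expn_leq s n m : s <= n -> 'C(s, m) * n ^ m <= s ^ m * 'C(n, m).
Proof.
move=> le_sn; rewrite -(leq_pmul2r (fact_gt0 m)) mulnAC -[_ * _ * m`!]mulnA !bin_ffact.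
rewrite !ffact_prod -[m in n ^ m]card_ord -[m in s ^ m]card_ord -!prod_nat_const.
rewrite -!big_split /=; apply: leq_prod => i _; nia.
Qed.

Lemma card_setC2 (T : finType) (x y : T) : x != y -> #|~: [set x; y]| = #|T| - 2.
Proof. by move=> xy; rewrite cardsCs setCK cards2 xy. Qed.

Lemma card_pairs_leq (T1 T2 : finType) (A : {set T1}) (Q : {set T1 * T2}) b :
    (forall q, q \in Q -> q.1 \in A) ->
    (forall a, a \in A -> #|[set t | (a, t) \in Q]| <= b) ->
  #|Q| <= #|A| * b.
Proof.
move=> QA fibQ; pose fiber a := [set t | (a, t) \in Q].
have sub : Q \subset \bigcup_(a in A) [set (a, t) | t in fiber a].
  apply/subsetP => -[a t] qQ; apply/bigcupP; exists a; first exact: QA qQ.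
  by apply/imsetP; exists t; rewrite ?inE.
rewrite -sum_nat_const; apply: leq_trans (subset_leq_card sub) _.
apply: leq_trans (unstable.card_big_setU _ _ _) _.
by apply: leq_sum => a aA; rewrite (leq_trans (leq_imset_card _ _)) ?fibQ.
Qed.

Section Stars.
Variables (n k : nat) (E : {set {set 'I_n}}).
Hypothesis kE : kgraph k E.

Lemma card_edges_supset (S : {set 'I_n}) :
  #|[set e in E | S \subset e]| <= 'C(n, k - #|S|).
Proof.
rewrite -[n in 'C(n, _)]card_ord -card_draws -(@card_in_imset _ _ (fun e => e :\: S)).
  apply: subset_leq_card; apply/subsetP => A /imsetP[e]; rewrite inE => /andP[eE Se] ->.
  by rewrite inE cardsD (setIidPr Se) (kE eE).
move=> e1 e2; rewrite !inE => /andP[_ S1] /andP[_ S2] eqD.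
apply/setP => z; case zS: (z \in S); first by rewrite (subsetP S1) // (subsetP S2).
by have := congr1 (fun B : {set _} => z \in B) eqD; rewrite /= !inE zS.
Qed.

Definition star (x y : 'I_n) := [set e in E | (x \in e) && (y \notin e)].
Definition star_at (x y w : 'I_n) := [set e in star x y | w \in e].

Variables (x y : 'I_n).

Lemma card_star_at w : w != x -> #|star_at x y w| <= 'C(n, k - 2).
Proof.
move=> wx; have -> : 2 = #|[set x; w]| by rewrite cards2 eq_sym wx.
apply: leq_trans (card_edges_supset _).
apply/subset_leq_card/subsetP => e; rewrite !inE => /andP[/andP[eE /andP[xe _]] we].
by rewrite eE subUset !sub1set xe we.
Qed.

Lemma card_star_leq (S : {set 'I_n}) :
  #|star x y| <= 'C(#|S|, k - 1) + \sum_(w in ~: [set x; y] :\: S) #|star_at x y w|.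
Proof.
rewrite -(cardsID [set e | e :\ x \subset S]); apply: leq_add.
  rewrite -cards_draws -(@card_in_imset _ _ (fun e => e :\ x)).
    apply/subset_leq_card/subsetP => A /imsetP[e]; rewrite !inE.
    move=> /andP[/andP[eE /andP[xe _]] eS] ->.
    rewrite eS /=; apply/eqP; have := cardsD1 x e; rewrite xe (kE eE) add1n => ->.
    by rewrite subn1.
  move=> e1 e2; rewrite !inE => /andP[/andP[_ /andP[x1 _]] _] /andP[/andP[_ /andP[x2 _]] _] eq12.
  by rewrite -(setD1K x1) -(setD1K x2) eq12.
apply: leq_trans (unstable.card_big_setU _ _ _).
apply/subset_leq_card/subsetP => e; rewrite !inE => /andP[eS /andP[eE /andP[xe ye]]].
have [w] := subsetPn eS; rewrite !inE => /andP[wx we] wS.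
apply/bigcupP; exists w; last by rewrite !inE eE xe ye we.
by rewrite !inE negb_or wx wS /=; apply: contraNneq ye => <-.
Qed.

Hypothesis xy : x != y.

Lemma deg_leq_star : deg E x <= #|star x y| + 'C(n, k - 2).
Proof.
have -> : 2 = #|[set x; y]| by rewrite cards2 xy.
apply: leq_trans (leq_add (leqnn _) (card_edges_supset _)).
apply: leq_trans (leq_card_setU _ _).1; apply/subset_leq_card/subsetP => e.
rewrite !inE subUset !sub1set => /andP[eE xe]; rewrite eE xe.
by case: (y \in e).
Qed.
End Stars.

Section MiddleVertex.
Variables (n k : nat) (E : {set {set 'I_n}}).
Hypothesis kE : kgraph k E.
Variables (x y : 'I_n).

Definition middle_paths (w : 'I_n) :=
  [set q in paths2 E x y | w \in q.1 :&: q.2].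

Lemma sum_card_middle_paths : \sum_w #|middle_paths w| = #|paths2 E x y|.
Proof.
have card_sum (T : finType) (A : {set T}) : #|A| = \sum_t (t \in A : nat).
  by rewrite -sum1_card big_mkcond; apply: eq_bigr => t _; case: (t \in A).
under eq_bigr => w _ do rewrite card_sum.
rewrite exchange_big [RHS]card_sum; apply: eq_bigr => q _.
have [qP|qP] := boolP (q \in paths2 E x y); last first.
  by rewrite big1 // => w _; rewrite in_set (negbTE qP).
have /and5P[_ _ _ _ /and3P[/eqP card_meet _ _]] : is_path2 E x y q by rewrite inE in qP.
rewrite (_ : nat_of_bool true = #|q.1 :&: q.2|); last by rewrite card_meet.
rewrite card_sum.
by apply: eq_bigr => w _; rewrite in_set qP.
Qed.

Lemma card_star_at_meet w e : e \in star_at E x y w ->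
  #|[set f in star_at E y x w | e :&: f != [set w]]| <= (k - 2) * 'C(n, k - 3).
Proof.
have [-> _|wx] := eqVneq w x.
  by rewrite eq_card0 // => f; rewrite !inE; case: (x \in f); rewrite ?andbF.
rewrite !inE => /andP[/andP[eE /andP[xe ye]] we].
(* A second common vertex u of e and f lies in e \ {x, w}, and f contains {y, w, u}. *)
set X := e :\: [set x; w].
have cardX : #|X| = k - 2.
  by rewrite cardsD (setIidPr _) ?(kE eE) ?cards2 1?eq_sym ?wx // subUset !sub1set xe we.
apply: leq_trans (_ : #|\bigcup_(u in X) [set f in E | [set y; w; u] \subset f]| <= _).
  apply/subset_leq_card/subsetP => f; rewrite !inE => /andP[/andP[/and3P[fE yf xf] wf] ew].
  move: ew; rewrite eqEsubset sub1set !inE we wf /= andbT => /subsetPn[u].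
  rewrite !inE => /andP[ue uf] uw; apply/bigcupP; exists u.
    by rewrite !inE negb_or ue uw !andbT; apply: contraNneq xf => <-.
  by rewrite inE fE !subUset !sub1set yf wf uf.
apply: leq_trans (unstable.card_big_setU _ _ _) _.
rewrite -cardX -sum_nat_const; apply: leq_sum => u; rewrite !inE negb_or => /andP[/andP[ux uw] ue].
have wy : w != y by apply: contraNneq ye => <-.
have uy : u != y by apply: contraNneq ye => <-.
have -> : 3 = #|[set y; w; u]|.
  by rewrite -setUA cardsU1 cards2 (eq_sym w) uw !inE negb_or !(eq_sym y) wy uy.
exact: (card_edges_supset kE).
Qed.

Lemma card_star_at_mul w :
  #|star_at E x y w| * #|star_at E y x w| <=
  #|middle_paths w| + #|star_at E x y w| * ((k - 2) * 'C(n, k - 3)).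
Proof.
rewrite -cardsX -(cardsID [set q | q.1 :&: q.2 == [set w]]); apply: leq_add.
  apply/subset_leq_card/subsetP => -[e f].
  rewrite !inE /= => /andP[/andP[/andP[/and3P[eE xe ye] we] /andP[/and3P[fE yf xf] wf]] /eqP ef].
  by rewrite /is_path2 /= eE fE xe yf xf ye ef cards1 we wf.
apply: (card_pairs_leq (A := star_at E x y w)) => [[e f]|e eA].
  by rewrite !inE => /andP[_ /andP[]].
apply: leq_trans (card_star_at_meet eA); apply/subset_leq_card/subsetP => f.
by rewrite !inE /= => /and4P[-> _ -> ->].
Qed.

Lemma sum_star_at_mul_leq (S : {set 'I_n}) : x \notin S ->
  \sum_(w in S) #|star_at E x y w| * #|star_at E y x w| <=
  #|paths2 E x y| + (k - 2) * n ^ (2 * (k - 2)).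
Proof.
move=> xS; rewrite -sum_card_middle_paths.
apply: leq_trans (_ : \sum_(w in S) (#|middle_paths w| +
    #|star_at E x y w| * ((k - 2) * 'C(n, k - 3))) <= _).
  by apply: leq_sum => w _; apply: card_star_at_mul.
rewrite big_split /=; apply: leq_add.
  by rewrite [X in _ <= X](bigID (mem S)) /= leq_addr.
apply: leq_trans (_ : \sum_(w in S) n ^ (k - 2) * ((k - 2) * n ^ (k - 3)) <= _).
  apply: leq_sum => w wS; rewrite leq_mul ?leq_mul2l ?bin_leq_expn ?orbT //.
  have wx : w != x by apply: contraNneq xS => <-.
  exact: leq_trans (card_star_at kE y wx) (bin_leq_expn _ _).
rewrite sum_nat_const.
apply: leq_trans (leq_mul (_ : #|S| <= n) (leqnn _)) _.
  by rewrite -[n in _ <= n]card_ord max_card.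
case: k => [|[|[|k']]]; rewrite ?muln0 ?mul0n //=.
rewrite !subSS !subn0 mul2n -addnn expnD expnS; apply: eq_leq; ring.
Qed.
End MiddleVertex.

Import Order.TTheory GRing.Theory Num.Theory.
Local Open Scope ring_scope.

Lemma subrXX_le (R : numDomainType) m (a b : R) :
  0 <= b -> b <= a -> a <= 1 -> a ^+ m - b ^+ m <= m%:R * (a - b).
Proof.
move=> b_ge0 le_ba le_a1; have a_ge0 := le_trans b_ge0 le_ba.
elim: m => [|m IHm]; first by rewrite !expr0 subrr mul0r.
have -> : a ^+ m.+1 - b ^+ m.+1 = a * (a ^+ m - b ^+ m) + b ^+ m * (a - b).
  by rewrite !exprS; ring.
rewrite -addn1 natrD mulrDl mul1r; apply: lerD.
  by apply: le_trans (ler_piMl _ le_a1) IHm; rewrite subr_ge0 lerXn2r.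
by apply: ler_piMl; rewrite ?subr_ge0 ?exprn_ile1 // (le_trans le_ba).
Qed.

Lemma eventually_ler_pMn (R : archiRealFieldType) (b a : R) : 0 < a ->
  exists m, forall n, (m <= n)%N -> b <= a * n%:R.
Proof.
move=> a_gt0; exists (Num.bound (`|b| / a)) => n le_mn.
have := archi_boundP (divr_ge0 (normr_ge0 b) (ltW a_gt0)).
rewrite ltr_pdivrMr // mulrC => /ltW b_le.
apply: le_trans (ler_norm b) (le_trans b_le _).
by rewrite ler_pM2l // ler_nat.
Qed.

Section Density.
Variables (R : realType) (p : nat) (eps : R).
Hypothesis eps_gt0 : 0 < eps.

Definition bin_const : R := ((2 * p.+1) ^ p.+1)%:R.
Definition heavy_const : R := eps / (4 * bin_const).
Definition excess : R := Num.min 2^-1 (eps / (2 * p.+1%:R)).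
Definition path_const : R := excess * heavy_const ^+ 2 / 2 ^+ (2 * p).+1.

Lemma bin_const_gt0 : 0 < bin_const.
Proof. by rewrite ltr0n expn_gt0. Qed.

Lemma heavy_const_gt0 : 0 < heavy_const.
Proof. by rewrite divr_gt0 // mulr_gt0 ?bin_const_gt0. Qed.

Lemma excess_gt0 : 0 < excess.
Proof. by rewrite lt_min invr_gt0 ltr0n divr_gt0 // mulr_gt0. Qed.

Lemma path_const_gt0 : 0 < path_const.
Proof. by rewrite divr_gt0 ?exprn_gt0 // mulr_gt0 ?excess_gt0 ?exprn_gt0 ?heavy_const_gt0. Qed.

Lemma expr_half_excess_le : (2^-1 + excess) ^+ p.+1 <= 2 ^- p.+1 + eps / 2.
Proof.
have le_excess_half : excess <= 2^-1 by rewrite ge_min lexx.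
have excess_mul : p.+1%:R * excess <= eps / 2.
  apply: le_trans (_ : p.+1%:R * (eps / (2 * p.+1%:R)) <= _).
    by rewrite ler_wpM2l // ge_min lexx orbT.
  by rewrite (_ : _ * _ = eps / 2) //; field; rewrite paddr_eq0 ?ler0n // oner_eq0.
have half_ge0 : 0 <= 2^-1 :> R by rewrite invr_ge0.
have le_half : 2^-1 <= 2^-1 + excess by rewrite lerDl ltW ?excess_gt0.
have le_1 : 2^-1 + excess <= 1 by lra.
have := subrXX_le p.+1 half_ge0 le_half le_1.
rewrite exprVn addrAC subrr add0r; lra.
Qed.

Lemma half_excess_le (s N : nat) : (s <= N)%N -> (0 < 'C(N, p.+1))%N ->
    (2 ^- p.+1 + eps / 2) * 'C(N, p.+1)%:R <= 'C(s, p.+1)%:R ->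
  (2^-1 + excess) * N%:R <= s%:R.
Proof.
move=> le_sN bin_gt0 bin_le.
have pow_le : (2 ^- p.+1 + eps / 2) * N%:R ^+ p.+1 <= s%:R ^+ p.+1.
  rewrite -(ler_pM2r (_ : 0 < 'C(N, p.+1)%:R)) ?ltr0n // mulrAC.
  apply: le_trans (_ : 'C(s, p.+1)%:R * N%:R ^+ p.+1 <= _).
    by rewrite ler_wpM2r ?exprn_ge0 ?ler0n.
  by rewrite -!natrX -!natrM ler_nat bin_mul_expn_leq.
have lhs_ge0 : 0 <= (2^-1 + excess) * N%:R.
  by rewrite mulr_ge0 ?ler0n // addr_ge0 ?invr_ge0 // ltW ?excess_gt0.
rewrite -(ler_pXn2r (ltn0Sn p)) ?nnegrE ?ler0n //.
apply: le_trans pow_le; rewrite exprMn ler_wpM2r ?exprn_ge0 ?ler0n //.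
exact: expr_half_excess_le.
Qed.

Section LargeOrder.
Variables (n : nat) (E : {set {set 'I_n}}).
Hypothesis kE : kgraph p.+2 E.
Local Notation N := (n - 2)%N.
Hypothesis large_N : (2 * p.+1 <= N)%N.
Hypothesis large_eps_N : 4 * bin_const * 2 ^+ p <= eps * N%:R.

Definition heavy (x y : 'I_n) :=
  [set w in ~: [set x; y] | heavy_const * N%:R ^+ p <= #|star_at E x y w|%:R].

Lemma card_heavy_leq x y : x != y -> (#|heavy x y| <= N)%N.
Proof.
move=> xy; rewrite -[n in (n - 2)%N]card_ord -(card_setC2 xy).
by apply/subset_leq_card/subsetP => w; rewrite inE => /andP[].
Qed.

Lemma N_gt0 : 0 < N%:R :> R.
Proof. by rewrite ltr0n (leq_trans _ large_N) ?muln_gt0. Qed.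

Lemma expn_le_bin_const : N%:R ^+ p.+1 <= bin_const * 'C(N, p.+1)%:R.
Proof. by rewrite -natrX -natrM ler_nat expn_leq_bin. Qed.

Lemma heavy_expn_le : heavy_const * N%:R ^+ p.+1 <= eps / 4 * 'C(N, p.+1)%:R.
Proof.
apply: le_trans (ler_wpM2l (ltW heavy_const_gt0) expn_le_bin_const) _.
rewrite mulrA (_ : heavy_const * bin_const = eps / 4) //.
by rewrite /heavy_const; field; rewrite lt0r_neq0 ?bin_const_gt0.
Qed.

Lemma light_sum_le x y : x != y ->
  (\sum_(w in ~: [set x; y] :\: heavy x y) #|star_at E x y w|)%:R <= eps / 4 * 'C(N, p.+1)%:R.
Proof.
move=> xy; rewrite natr_sum.
apply: le_trans (_ : \sum_(w in ~: [set x; y] :\: heavy x y) heavy_const * N%:R ^+ p <= _).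
  apply: ler_sum => w; rewrite in_setD => /andP[light wV].
  by move: light; rewrite inE wV /= -ltNge => /ltW.
have card_light : (#|~: [set x; y] :\: heavy x y| <= N)%N.
  by rewrite -[n in (n - 2)%N]card_ord -(card_setC2 xy) subset_leq_card ?subsetDl.
rewrite sumr_const -[leLHS]mulr_natr.
apply: le_trans heavy_expn_le.
by rewrite exprSr mulrA ler_pM2l ?ler_nat // mulr_gt0 ?heavy_const_gt0 ?exprn_gt0 ?N_gt0.
Qed.

Lemma bin_le_eps : 'C(n, p)%:R <= eps / 4 * 'C(N, p.+1)%:R.
Proof.
have n_le : n%:R <= 2 * N%:R :> R by rewrite -natrM ler_nat; lia.
apply: le_trans (_ : (2 * N%:R) ^+ p <= _).
  apply: le_trans (_ : n%:R ^+ p <= _); first by rewrite -natrX ler_nat bin_leq_expn.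
  by apply: lerXn2r n_le; rewrite nnegrE ?mulr_ge0 ?ler0n.
apply: le_trans heavy_expn_le.
rewrite exprMn exprSr mulrA mulrAC ler_pM2r ?exprn_gt0 ?N_gt0 //.
rewrite /heavy_const mulrAC ler_pdivlMr ?mulr_gt0 ?bin_const_gt0 //.
by rewrite mulrC.
Qed.

Section Vertex.
Variables (x y : 'I_n).
Hypothesis xy : x != y.
Hypothesis deg_x : (2 ^- p.+1 + eps) * 'C(n - 1, p.+1)%:R <= (deg E x)%:R.

Lemma bin_card_heavy_ge :
  (2 ^- p.+1 + eps / 2) * 'C(N, p.+1)%:R <= 'C(#|heavy x y|, p.+1)%:R.
Proof.
have := deg_leq_star kE xy; have := card_star_leq kE x y (heavy x y).
rewrite !subSS !subn0 -!(ler_nat R) !natrD => star_le deg_le.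
have bin_le : 'C(N, p.+1)%:R <= 'C(n - 1, p.+1)%:R :> R.
  by rewrite ler_nat leq_bin2l // leq_sub2l.
have coef_ge0 : 0 <= 2 ^- p.+1 + eps :> R by rewrite addr_ge0 ?invr_ge0 ?exprn_ge0 ?ltW.
have := ler_wpM2l coef_ge0 bin_le; have := light_sum_le xy; have := bin_le_eps.
have := deg_x; set a := 2 ^- p.+1; lra.
Qed.

Lemma card_heavy_ge : (2^-1 + excess) * N%:R <= #|heavy x y|%:R.
Proof.
apply: half_excess_le bin_card_heavy_ge; first exact: card_heavy_leq.
by rewrite bin_gt0 (leq_trans _ large_N) // leq_pmull.
Qed.
End Vertex.

Lemma card_common_heavy_ge x y : x != y ->
    (2 ^- p.+1 + eps) * 'C(n - 1, p.+1)%:R <= (deg E x)%:R ->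
    (2 ^- p.+1 + eps) * 'C(n - 1, p.+1)%:R <= (deg E y)%:R ->
  2 * excess * N%:R <= #|heavy x y :&: heavy y x|%:R.
Proof.
move=> xy deg_x deg_y; have yx : y != x by rewrite eq_sym.
have union_le : (#|heavy x y :|: heavy y x| <= N)%N.
  rewrite -[n in (n - 2)%N]card_ord -(card_setC2 xy) subset_leq_card //.
  by apply/subsetP => w; rewrite !inE => /orP[] /andP[]; rewrite // orbC.
have card_eq : #|heavy x y :|: heavy y x|%:R + #|heavy x y :&: heavy y x|%:R =
    #|heavy x y|%:R + #|heavy y x|%:R :> R by rewrite -!natrD cardsUI.
move: union_le; rewrite -(ler_nat R) => union_le.
have := card_heavy_ge xy deg_x; have := card_heavy_ge yx deg_y; lra.
Qed.

Lemma path_const_expn_le :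
  path_const * n%:R ^+ (2 * p).+1 <= excess * heavy_const ^+ 2 * N%:R ^+ (2 * p).+1.
Proof.
rewrite /path_const mulrAC ler_pdivrMr ?exprn_gt0 // -[leRHS]mulrA -exprMn.
apply: ler_wpM2l; first by rewrite mulr_ge0 ?exprn_ge0 ?ltW ?excess_gt0 ?heavy_const_gt0.
by apply: lerXn2r; rewrite ?nnegrE ?mulr_ge0 ?ler0n // -natrM ler_nat; lia.
Qed.

Hypothesis large_path : p%:R <= path_const * n%:R.

Lemma paths2_ge x y : x != y ->
    (forall v, (2 ^- p.+1 + eps) * 'C(n - 1, p.+1)%:R <= (deg E v)%:R) ->
  path_const * n%:R ^+ (2 * p).+1 <= #|paths2 E x y|%:R.
Proof.
move=> xy deg_ge; set S := heavy x y :&: heavy y x.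
set t := heavy_const * N%:R ^+ p.
have xS : x \notin S by rewrite !inE eqxx.
have paths_ge := sum_star_at_mul_leq kE y xS.
rewrite !subSS subn0 -(ler_nat R) natrD natrM natrX in paths_ge.
have sum_ge : #|S|%:R * (t * t) <=
    (\sum_(w in S) #|star_at E x y w| * #|star_at E y x w|)%:R.
  rewrite natr_sum mulr_natl -sumr_const; apply: ler_sum => w.
  rewrite !inE => /andP[/andP[_ t_le_xy] /andP[_ t_le_yx]].
  by rewrite natrM ler_pM // mulr_ge0 ?exprn_ge0 ?ler0n // ltW ?heavy_const_gt0.
have S_ge := card_common_heavy_ge xy (deg_ge x) (deg_ge y).
have main_ge : 2 * (excess * heavy_const ^+ 2 * N%:R ^+ (2 * p).+1) <= #|S|%:R * (t * t).
  have t_ge0 : 0 <= t * t by rewrite mulr_ge0 // ltW // mulr_gt0 ?exprn_gt0 ?heavy_const_gt0 ?N_gt0.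
  apply: le_trans (ler_wpM2r t_ge0 S_ge).
  rewrite (_ : _ * (t * t) = 2 * (excess * heavy_const ^+ 2 * N%:R ^+ (2 * p).+1)) //.
  by rewrite /t [N%:R ^+ _.+1]exprS mul2n -addnn exprD; ring.
have err_le : p%:R * n%:R ^+ (2 * p) <= path_const * n%:R ^+ (2 * p).+1.
  by rewrite exprS mulrA ler_wpM2r ?exprn_ge0 ?ler0n.
have := path_const_expn_le; lra.
Qed.

End LargeOrder.

Lemma eventually_large : exists n0, forall n, (n0 <= n)%N ->
  [/\ (2 * p.+1 <= n - 2)%N, 4 * bin_const * 2 ^+ p <= eps * (n - 2)%:R
     & p%:R <= path_const * n%:R].
Proof.
have [n1 large1] := eventually_ler_pMn (4 * bin_const * 2 ^+ p) eps_gt0.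
have [n2 large2] := eventually_ler_pMn p%:R path_const_gt0.
exists (2 * p.+1 + 2 + n1 + n2)%N => n le_n; split.
- lia.
- by apply: large1; lia.
- by apply: large2; lia.
Qed.

End Density.

Theorem lemma4p8 (R : realType) (k : nat) (eps : R) :
  (2 <= k)%N -> 0 < eps ->
  exists delta : R, 0 < delta /\
  exists n0 : nat, forall (n : nat) (E : {set {set 'I_n}}),
    (n0 <= n)%N -> kgraph k E ->
    (forall v : 'I_n,
       ((2%:R ^- (k - 1)%N + eps) * ('C(n - 1, k - 1))%:R <= (deg E v)%:R)) ->
    forall x1 x2 : 'I_n, x1 != x2 ->
      delta * n%:R ^+ (2 * k - 3)%N <= (#|paths2 E x1 x2|)%:R.
Proof.
case: k => [|[|p]] // _ eps_gt0.
have [n0 large] := eventually_large p eps_gt0.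
exists (path_const p eps); split; first exact: path_const_gt0.
exists n0 => n E le_n0n kE deg_ge x1 x2 x12.
have [large_N large_eps_N large_path] := large n le_n0n.
rewrite (_ : (2 * p.+2 - 3 = (2 * p).+1)%N); last lia.
apply: (paths2_ge eps_gt0 kE large_N large_eps_N large_path x12) => v.
by have := deg_ge v; rewrite subn1.
Qed.
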